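(* Let $n\geq 3$ and let $P=[p_{ij}]$ be the $n\times n$ symmetric matrix with $p_{ii}=x_i\geq 0$ ($1\le i\le n$), $p_{i,i+2}=p_{i+2,i}=y_i\geq 0$ ($1\le i\le n-2$), and all other entries equal to $0$. Then $P$ is infinitely divisible if and only if $P$ is positive semidefinite and neither of the sequences $(y_2,y_4,y_6,\ldots)$ and $(y_1,y_3,y_5,\ldots)$ (indices at most $n-2$) has two consecutive positive entries. In particular, for $n=3$ and $n=4$, $P$ is infinitely divisible if and only if $P$ is positive semidefinite.
   Context: For a nonnegative matrix $A=[a_{ij}]$ and $r>0$, $A^{\circ r}=[a_{ij}^r]$. A nonnegative symmetric matrix $A$ is infinitely divisible if $A^{\circ r}$ is positive semidefinite for every $r>0$. *)

From HB Require Import structures.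
From mathcomp Require Import all_boot all_order all_algebra.
From mathcomp Require Import reals exp.
Set Implicit Arguments. Unset Strict Implicit. Unset Printing Implicit Defensive.
Import Order.TTheory GRing.Theory Num.Theory.
Local Open Scope ring_scope.

Definition psd (R : realType) (n : nat) (A : 'M[R]_n) : Prop :=
  forall v : 'cV[R]_n, 0 <= ((v^T *m A *m v) 0 0).

Definition hpow (R : realType) (n : nat) (A : 'M[R]_n) (r : R) : 'M[R]_n :=
  \matrix_(i, j) powR (A i j) r.

Definition inf_div (R : realType) (n : nat) (A : 'M[R]_n) : Prop :=
  (forall i j, 0 <= A i j) /\ A^T = A /\
  (forall r : R, 0 < r -> psd (hpow A r)).

(* The matrix P of the paper, entries indexed 1-based through x, y:
   P_{ii} = x_i, P_{i,i+2} = P_{i+2,i} = y_i, all others 0.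
   Here row/column k : 'I_n corresponds to paper index k+1. *)
Definition Pmat (R : realType) (n : nat) (x y : nat -> R) : 'M[R]_n :=
  \matrix_(i, j)
    if i == j :> nat then x i.+1
    else if j == i.+2 :> nat then y i.+1
    else if i == j.+2 :> nat then y j.+1
    else 0.

From HB Require Import structures.
From mathcomp Require Import all_boot all_order all_algebra.
From mathcomp Require Import reals exp.
From mathcomp Require Import ring lra zify.
Import Order.TTheory GRing.Theory Num.Theory.
Local Open Scope ring_scope.

(* The off-diagonal entries of P only link indices i and i+2, so P splits into
   its odd- and even-indexed tridiagonal chains.  If no chain has two
   consecutive positive entries, the quadratic form of any Hadamard power of P
   is a sum of diagonal terms and of disjoint 2x2 blocks, and a PSD 2x2 block
   stays PSD under Hadamard powers since y^2 <= x x' is preserved by t |-> t^r.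
   Conversely, positive y_i and y_(i+2) give a tridiagonal 3x3 principal
   submatrix whose r-th Hadamard power has determinant
     (x_i x_(i+2) x_(i+4))^r - (y_i^2 x_(i+4))^r - (y_(i+2)^2 x_i)^r,
   which is negative for small r > 0 because each power tends to 1. *)

Lemma binary_form_ge0 {R : realFieldType} {A B C : R} (u w : R) :
  0 <= A -> 0 <= C -> B ^+ 2 <= A * C ->
  0 <= A * u ^+ 2 + 2 * B * u * w + C * w ^+ 2.
Proof.
move=> A_ge0 C_ge0 disc; have [A0|A_neq0] := eqVneq A 0.
  have B0 : B = 0 by apply/eqP; rewrite -sqrf_eq0 eq_le sqr_ge0 andbT -(mul0r C) -A0.
  by rewrite A0 B0 !(mul0r, mulr0, add0r) mulr_ge0 ?sqr_ge0.
have A_gt0 : 0 < A by rewrite lt_def A_neq0.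
rewrite -(pmulr_rge0 _ A_gt0).
have -> : A * (A * u ^+ 2 + 2 * B * u * w + C * w ^+ 2) =
          (A * u + B * w) ^+ 2 + (A * C - B ^+ 2) * w ^+ 2 by ring.
by rewrite addr_ge0 ?sqr_ge0 // mulr_ge0 ?sqr_ge0 // subr_ge0.
Qed.

Lemma binary_form_discr {R : realFieldType} (A B C : R) :
  (forall u w, 0 <= A * u ^+ 2 + 2 * B * u * w + C * w ^+ 2) -> B ^+ 2 <= A * C.
Proof.
move=> form_ge0.
have A_ge0 : 0 <= A by have := form_ge0 1 0; lra.
have C_ge0 : 0 <= C by have := form_ge0 0 1; lra.
have [A0|A_neq0] := eqVneq A 0.
  have := form_ge0 (- (C + 1)) B; rewrite A0; nra.
have A_gt0 : 0 < A by rewrite lt_def A_neq0.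
have := form_ge0 (- B) A.
have -> : A * (- B) ^+ 2 + 2 * B * - B * A + C * A ^+ 2 = A * (A * C - B ^+ 2) by ring.
by rewrite pmulr_rge0 // subr_ge0.
Qed.

Lemma tridiag_form_det {R : realFieldType} (A B C D E : R) :
  (forall u v w,
     0 <= A * u ^+ 2 + 2 * B * u * v + C * v ^+ 2 + 2 * D * v * w + E * w ^+ 2) ->
  0 < A -> 0 < E -> B ^+ 2 * E + D ^+ 2 * A <= A * C * E.
Proof.
move=> form_ge0 A_gt0 E_gt0; have := form_ge0 (B * E) (- (A * E)) (D * A).
have -> : A * (B * E) ^+ 2 + 2 * B * (B * E) * - (A * E) + C * (- (A * E)) ^+ 2
          + 2 * D * - (A * E) * (D * A) + E * (D * A) ^+ 2
        = A * E * (A * C * E - (B ^+ 2 * E + D ^+ 2 * A)) by ring.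
by rewrite pmulr_rge0 ?mulr_gt0 // subr_ge0.
Qed.

Lemma exists_powR_lt_add {R : realType} {p q s : R} :
  0 <= p -> 0 < q -> 0 < s -> exists2 r, 0 < r & p `^ r < q `^ r + s `^ r.
Proof.
move=> p_ge0 q_gt0 s_gt0.
set u := p / q + p / s + 2.
have pq_ge0 : 0 <= p / q := divr_ge0 p_ge0 (ltW q_gt0).
have ps_ge0 : 0 <= p / s := divr_ge0 p_ge0 (ltW s_gt0).
have u_gt1 : 1 < u by rewrite /u; lra.
have lnu_gt0 : 0 < ln u by exact: ln_gt0.
have r_gt0 : 0 < ln (3 / 2) / ln u by rewrite divr_gt0 // ln_gt0 //; lra.
set r := ln (3 / 2) / ln u in r_gt0 *.
(* r is chosen so that u ^ r = 3/2, while p <= u q and p <= u s *)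
have ur : u `^ r = 3 / 2.
  rewrite /powR gt_eqF; last lra.
  by rewrite divfK ?gt_eqF // lnK // posrE; lra.
have le_scaled t : 0 < t -> p / t <= u -> p `^ r <= 3 / 2 * t `^ r.
  move=> t_gt0 le_pt; rewrite -ur -powRM; [|lra|exact: ltW].
  apply: ge0_ler_powR; rewrite ?nnegrE.
  - exact: ltW.
  - exact: p_ge0.
  - apply: mulr_ge0; [lra | exact: ltW].
  - by rewrite -ler_pdivrMr.
have pr_le_q : p `^ r <= 3 / 2 * q `^ r by apply: le_scaled; rewrite // /u; lra.
have pr_le_s : p `^ r <= 3 / 2 * s `^ r by apply: le_scaled; rewrite // /u; lra.
have := powR_gt0 r q_gt0; have := powR_gt0 r s_gt0.
exists r => //; lra.
Qed.

Section PsdFacts.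
Context {R : realType} {n : nat}.
Implicit Types (M : 'M[R]_n).

Lemma quad_form_delta M (s : seq ('I_n * R)) :
  let v : 'cV_n := \sum_(p <- s) p.2 *: delta_mx p.1 0 in
  (v^T *m M *m v) 0 0 = \sum_(p <- s) \sum_(q <- s) p.2 * q.2 * M p.1 q.1.
Proof.
rewrite /= [RHS]exchange_big mulmx_sumr summxE; apply: eq_bigr => q _.
rewrite linear_sum /= !mulmx_suml summxE; apply: eq_bigr => p _.
rewrite !linearZ /= trmx_delta -!scalemxAl mxE [X in _ * X]mxE -rowE -colE !mxE.
by rewrite mulrA [q.2 * _]mulrC.
Qed.

Lemma psd_delta_form_ge0 {M} : psd M ->
  forall s : seq ('I_n * R), 0 <= \sum_(p <- s) \sum_(q <- s) p.2 * q.2 * M p.1 q.1.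
Proof. by move=> psdM s; rewrite -quad_form_delta. Qed.

Lemma psd_minor2 {M} : psd M ->
  forall i j, M j i = M i j -> M i j ^+ 2 <= M i i * M j j.
Proof.
move=> psdM i j Mji; apply: binary_form_discr => u w.
have := psd_delta_form_ge0 psdM [:: (i, u); (j, w)].
rewrite !big_cons !big_nil /= Mji; lra.
Qed.

Lemma inf_div_psd {M} : inf_div M -> psd M.
Proof.
case=> M_ge0 [_ /(_ 1 ltr01)].
suff -> : hpow M 1 = M by [].
by apply/matrixP => i j; rewrite mxE powRr1.
Qed.

End PsdFacts.

Section ChainForm.
Context {R : realType} (d e w : nat -> R).
Hypotheses (d_ge0 : forall i, 0 <= d i) (e_ge0 : forall i, 0 <= e i)
  (e_sqr_le : forall i, e i ^+ 2 <= d i * d i.+2)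
  (e_isolated : forall i, ~ (0 < e i /\ 0 < e i.+2)).

(* The part of the diagonal term at j already used up by the 2x2 block (j-2, j);
   isolation of the positive e's means each diagonal term is used at most once. *)
Let spent j := if j is k.+2 then (0 < e k)%R%:R * (d j * w j ^+ 2) else 0.

Let spent_le j : spent j <= d j * w j ^+ 2.
Proof.
have dw_ge0 : 0 <= d j * w j ^+ 2 by rewrite mulr_ge0 ?sqr_ge0.
by case: j dw_ge0 => [|[|k]] //= dw_ge0; case: (0 < e k); rewrite ?mul1r ?mul0r.
Qed.

Let chain_form_spent_ge0 m :
  0 <= \sum_(0 <= i < m) (d i * w i ^+ 2 + 2 * e i * w i * w i.+2) + spent m + spent m.+1.
Proof.
elim: m => [|m IH]; first by rewrite big_geq //= !addr0.
rewrite big_nat_recr //= -/(spent m.+1).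
have [em_gt0|em_ngt0] := boolP (0 < e m).
  have spent_m0 : spent m = 0.
    case: m {IH} em_gt0 => [|[|k]] // ek2_gt0; rewrite /spent.
    by case: ltrP => [ek_gt0|]; [case: (e_isolated k) | rewrite mul0r].
  have := binary_form_ge0 (w m) (w m.+2) (d_ge0 m) (d_ge0 m.+2) (e_sqr_le m).
  rewrite mul1r; rewrite spent_m0 in IH; lra.
have em0 : e m = 0 by apply/eqP; rewrite eq_le e_ge0 andbT leNgt.
have := spent_le m; rewrite em0 mul0r; lra.
Qed.

Lemma chain_form_ge0 m : w m = 0 -> w m.+1 = 0 ->
  0 <= \sum_(0 <= i < m) (d i * w i ^+ 2 + 2 * e i * w i * w i.+2).
Proof.
have spent0 j : w j = 0 -> spent j = 0.
  by case: j => [|[|j]] //= ->; rewrite expr0n /= !mulr0.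
by move=> /spent0 sm /spent0 sm1; have := chain_form_spent_ge0 m; rewrite sm sm1 !addr0.
Qed.

End ChainForm.

Lemma sum_nat_delta {R : realType} (w : nat -> R) c k n :
  (forall j, (n <= j)%N -> w j = 0) ->
  \sum_(0 <= j < n) (j == k)%:R * (c * w j) = c * w k.
Proof.
move=> w_out; transitivity (\sum_(0 <= j < n | j == k) c * w j).
  by rewrite [RHS]big_mkcond; apply: eq_bigr => j _; rewrite mulr_natl mulrb.
by rewrite big_nat1_eq; case: ltnP => [//|/w_out->]; rewrite mulr0.
Qed.

Section Band.
Context {R : realType} (d e : nat -> R).

Definition band (i j : nat) : R :=
  if i == j then d i else if j == i.+2 then e i else if i == j.+2 then e j else 0.

Definition band_mx n : 'M[R]_n := \matrix_(i, j) band i j.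

Lemma bandC i j : band i j = band j i.
Proof.
rewrite /band [j == i]eq_sym; case: eqP => [ij|_]; first by rewrite ij.
by case: eqP => [ji|_]; case: eqP => [ij|_] //; lia.
Qed.

Lemma band_mx_tr n : (band_mx n)^T = band_mx n.
Proof. by apply/matrixP => i j; rewrite !mxE bandC. Qed.

Lemma band_diag i : band i i = d i.
Proof. by rewrite /band eqxx. Qed.

Lemma band_sup i : band i i.+2 = e i.
Proof. by rewrite /band eqxx; case: eqVneq => // /eqP; lia. Qed.

Lemma band_sub i : band i.+2 i = e i.
Proof. by rewrite bandC band_sup. Qed.

Lemma band_far i j : (i.+2 < j)%N -> band i j = 0.
Proof. by move=> ij; rewrite /band !ifN_eq //; apply/eqP; lia. Qed.

Lemma band_split i j :
  band i j = (i == j)%:R * d i + (j == i.+2)%:R * e i + (i == j.+2)%:R * e j.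
Proof.
have neq_SS k l : (k == k + l.+1)%N = false by apply/eqP; lia.
rewrite /band; case: eqP => [<-|_].
  by rewrite -[i.+2]addn2 neq_SS /=; ring.
case: eqP => [->|_]; first by rewrite -[i.+4]addn4 neq_SS /=; ring.
by case: eqP => _ /=; ring.
Qed.

Lemma band_mx_form {n} {v : 'cV[R]_n} {w : nat -> R} :
  (forall i : 'I_n, v i 0 = w i) -> (forall k, (n <= k)%N -> w k = 0) ->
  (v^T *m band_mx n *m v) 0 0 =
  \sum_(0 <= i < n) (d i * w i ^+ 2 + 2 * e i * w i * w i.+2).
Proof.
move=> vw w_out.
transitivity (\sum_(0 <= i < n) \sum_(0 <= j < n) w i * band i j * w j).
  rewrite exchange_big_nat mxE big_mkord; apply: eq_bigr => j _.
  rewrite mxE big_distrl big_mkord; apply: eq_bigr => i _.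
  by rewrite !mxE !vw.
transitivity (\sum_(0 <= i < n) \sum_(0 <= j < n)
  ((j == i)%:R * (d i * w i * w j) + (j == i.+2)%:R * (e i * w i * w j)
   + (i == j.+2)%:R * (e j * w j * w i))).
  by apply: eq_bigr => i _; apply: eq_bigr => j _; rewrite band_split eq_sym; ring.
under eq_bigr => i _ do rewrite !big_split /=.
rewrite !big_split /= [X in _ + X]exchange_big_nat -!big_split /=.
by apply: eq_bigr => i _; rewrite !sum_nat_delta //; ring.
Qed.

Lemma band_mx_ge0 n :
  (forall k, (k < n)%N -> 0 <= d k) -> (forall k, (k.+2 < n)%N -> 0 <= e k) ->
  forall i j, 0 <= band_mx n i j.
Proof.
move=> d_ge0 e_ge0 i j; rewrite mxE /band.
case: eqP => _; first exact: d_ge0.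
case: eqP => [ji|_]; first by apply: e_ge0; rewrite -ji.
by case: eqP => [ij|_] //; apply: e_ge0; rewrite -ij.
Qed.

End Band.

Lemma hpow_band_mx {R : realType} (d e : nat -> R) n r : r != 0 ->
  hpow (band_mx d e n) r = band_mx (fun k => d k `^ r) (fun k => e k `^ r) n.
Proof.
move=> r_neq0; apply/matrixP => i j; rewrite !mxE /band.
by do 3 case: ifP => // _; rewrite powR0.
Qed.

Lemma psd_band_mx {R : realType} n (d e : nat -> R) :
  (forall k, (k < n)%N -> 0 <= d k) -> (forall k, (k.+2 < n)%N -> 0 <= e k) ->
  (forall k, (k.+2 < n)%N -> e k ^+ 2 <= d k * d k.+2) ->
  (forall k, (k.+4 < n)%N -> ~ (0 < e k /\ 0 < e k.+2)) ->
  psd (band_mx d e n).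
Proof.
move=> d_ge0 e_ge0 e_sqr_le e_isolated.
pose d' k := if (k < n)%N then d k else 0.
pose e' k := if (k.+2 < n)%N then e k else 0.
have -> : band_mx d e n = band_mx d' e' n.
  apply/matrixP => i j; rewrite !mxE /band /d' /e' ltn_ord.
  case: eqP => // _; case: eqP => [<-|_]; first by rewrite ltn_ord.
  by case: eqP => [<-|_]; rewrite ?ltn_ord.
have d'_ge0 k : 0 <= d' k by rewrite /d'; case: ifP => // /d_ge0.
move=> v; pose w k := if insub k is Some i then v i 0 else 0.
have vw (i : 'I_n) : v i 0 = w i by rewrite /w valK.
have w_out k : (n <= k)%N -> w k = 0 by move=> nk; rewrite /w insubF // ltnNge nk.
rewrite (band_mx_form d' e' vw w_out); apply: chain_form_ge0 (w_out _ _) (w_out _ _) => //.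
- by move=> k; rewrite /e'; case: ifP => // /e_ge0.
- move=> k; rewrite /e'; case: ifP => [k2|_]; last by rewrite expr0n /= mulr_ge0.
  have k0 : (k < n)%N by lia.
  by rewrite /d' k0 k2; apply: e_sqr_le.
- rewrite /e' => k; case: ifP => _; last by case; rewrite ltxx.
  by case: ifP => [k4|_]; [apply: e_isolated | case=> _; rewrite ltxx].
Qed.

Lemma band_mx_minor {R : realType} {n} {d e : nat -> R} {k} :
  psd (band_mx d e n) -> (k.+2 < n)%N -> e k ^+ 2 <= d k * d k.+2.
Proof.
move=> psdB k2; have k0 : (k < n)%N by lia.
have := psd_minor2 psdB (Ordinal k0) (Ordinal k2).
by rewrite !mxE /= !band_diag band_sup band_sub; apply.
Qed.

Lemma inf_div_band_isolated {R : realType} n (d e : nat -> R) k :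
  inf_div (band_mx d e n) -> (k.+4 < n)%N -> ~ (0 < e k /\ 0 < e k.+2).
Proof.
move=> divB k4 [ek_gt0 ek2_gt0].
have psdB := inf_div_psd divB; have [B_ge0 [_ psd_hpow]] := divB.
have k0 : (k < n)%N by lia.
have k2 : (k.+2 < n)%N by lia.
have d_ge0 j : (j < n)%N -> 0 <= d j.
  by move=> jn; have := B_ge0 (Ordinal jn) (Ordinal jn); rewrite mxE band_diag.
have dk0 := d_ge0 _ k0; have dk2 := d_ge0 _ k2; have dk4 := d_ge0 _ k4.
have dk_gt0 : 0 < d k by have := band_mx_minor psdB k2; nra.
have dk4_gt0 : 0 < d k.+4 by have := band_mx_minor psdB k4; nra.
have [r r_gt0] := exists_powR_lt_add (mulr_ge0 (mulr_ge0 dk0 dk2) dk4)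
  (mulr_gt0 (exprn_gt0 2 ek_gt0) dk4_gt0) (mulr_gt0 (exprn_gt0 2 ek2_gt0) dk_gt0).
have ek0 := ltW ek_gt0; have ek2 := ltW ek2_gt0.
rewrite !expr2 !powRM ?mulr_ge0 //.
suff : (e k `^ r) ^+ 2 * d k.+4 `^ r + (e k.+2 `^ r) ^+ 2 * d k `^ r
       <= d k `^ r * d k.+2 `^ r * d k.+4 `^ r by rewrite !expr2; lra.
apply: tridiag_form_det; [|exact: powR_gt0..].
  move=> u v w; have := psd_delta_form_ge0 (psd_hpow r r_gt0)
    [:: (Ordinal k0, u); (Ordinal k2, v); (Ordinal k4, w)].
  rewrite hpow_band_mx ?gt_eqF // !big_cons !big_nil !mxE /= !band_diag !band_sup !band_sub.
  by rewrite band_far // bandC band_far //; lra.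
Qed.

Lemma Pmat_band {R : realType} n (x y : nat -> R) :
  Pmat n x y = band_mx (fun k => x k.+1) (fun k => y k.+1) n.
Proof. by []. Qed.

Lemma powR_sqr_le_mul {R : realType} {a b c r : R} :
  0 <= a -> 0 <= b -> 0 <= c -> 0 <= r ->
  a ^+ 2 <= b * c -> (a `^ r) ^+ 2 <= b `^ r * c `^ r.
Proof.
move=> a_ge0 b_ge0 c_ge0 r_ge0 le_abc; rewrite expr2 -!powRM //.
by apply: ge0_ler_powR; rewrite ?nnegrE ?mulr_ge0 // -expr2.
Qed.

Lemma inf_div_Pmat_iff {R : realType} {n} {x y : nat -> R} :
  (forall i, (1 <= i <= n)%N -> 0 <= x i) ->
  (forall i, (1 <= i <= n - 2)%N -> 0 <= y i) ->
  inf_div (Pmat n x y) <->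
  psd (Pmat n x y) /\
  (forall k, (1 <= k)%N -> (k + 2 <= n - 2)%N -> ~ (0 < y k /\ 0 < y (k + 2)%N)).
Proof.
move=> hx hy; rewrite Pmat_band.
set d := fun k => x k.+1; set e := fun k => y k.+1.
have d_ge0 k : (k < n)%N -> 0 <= d k by move=> kn; apply: hx; lia.
have e_ge0 k : (k.+2 < n)%N -> 0 <= e k by move=> kn; apply: hy; lia.
split=> [divP | [psdP isolated]].
  split=> [|[|k] // _ k4]; first exact: inf_div_psd divP.
  by rewrite addn2; apply: inf_div_band_isolated divP _; lia.
split; first exact: band_mx_ge0.
split=> [|r r_gt0]; first exact: band_mx_tr.
rewrite hpow_band_mx ?gt_eqF //; apply: psd_band_mx => k kn.
- exact: powR_ge0.
- exact: powR_ge0.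
- apply: powR_sqr_le_mul _ _ _ (ltW r_gt0) (band_mx_minor psdP kn).
  + exact: e_ge0.
  + by apply: d_ge0; lia.
  + exact: d_ge0.
- have [k2 k4] : (k.+2 < n)%N /\ (k.+2.+2 < n)%N by lia.
  move=> [/(gt0_powR r_gt0 (e_ge0 _ k2)) ek /(gt0_powR r_gt0 (e_ge0 _ k4)) ek2].
  by apply: (isolated k.+1); rewrite ?addn2 //; lia.
Qed.

Theorem corollary2p6 (R : realType) (n : nat) (x y : nat -> R)
  (hn : (3 <= n)%N)
  (hx : forall i, (1 <= i <= n)%N -> 0 <= x i)
  (hy : forall i, (1 <= i <= n - 2)%N -> 0 <= y i) :
  (inf_div (Pmat n x y) <->
     (psd (Pmat n x y) /\
      (* no two consecutive positive entries in (y_2, y_4, ...) *)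
      (forall k, ~~ odd k -> (1 <= k)%N -> (k + 2 <= n - 2)%N ->
          ~ (0 < y k /\ 0 < y (k + 2)%N)) /\
      (* no two consecutive positive entries in (y_1, y_3, ...) *)
      (forall k, odd k -> (1 <= k)%N -> (k + 2 <= n - 2)%N ->
          ~ (0 < y k /\ 0 < y (k + 2)%N))))
  /\ ((n == 3)%N || (n == 4)%N -> (inf_div (Pmat n x y) <-> psd (Pmat n x y))).
Proof.
(* The argument works for every n. *)
have divP := inf_div_Pmat_iff hx hy.
split.
  rewrite divP; split=> [[psdP isolated] | [psdP [isolated_even isolated_odd]]].
    by split=> //; split=> k _; apply: isolated.
  by split=> // k; case: (boolP (odd k)) => [/isolated_odd | /isolated_even].
move=> n34; rewrite divP; split=> [[] // | psdP]; split=> // k k1 k2.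
have n4 : (n <= 4)%N by case/orP: n34 => /eqP->.
lia.
Qed.
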